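(* Let $\mathbf L\in\mathbb R_+^{n\times k}$ and let $\boldsymbol\psi:\mathcal C\to\mathbb R_+^n$ be a surrogate loss on a convex set $\mathcal C\subseteq\mathbb R^d$. Then $\boldsymbol\psi$ is $\mathbf L$-calibrated if and only if there exists a function $\mathrm{pred}':\mathcal S_\psi\to[k]$ such that for every $\mathbf p\in\Delta_n$ and every sequence $\{\mathbf z_m\}$ in $\mathcal S_\psi$ with $\lim_{m\to\infty}\mathbf p^\top\mathbf z_m=\inf_{\mathbf z\in\mathcal S_\psi}\mathbf p^\top\mathbf z$, we have $\mathbf p^\top\boldsymbol\ell_{\mathrm{pred}'(\mathbf z_m)}=\min_{t\in[k]}\mathbf p^\top\boldsymbol\ell_t$ for all sufficiently large $m$.
   Context: Notation: $[m]=\{1,\dots,m\}$; $\Delta_n=\{\mathbf p\in\mathbb R_+^n:\sum_i p_i=1\}$. A loss matrix $\mathbf L\in\mathbb R_+^{n\times k}$ has columns $\boldsymbol\ell_t$, $t\in[k]$. $\mathcal R_\psi=\boldsymbol\psi(\mathcal C)$, $\mathcal S_\psi=\operatorname{conv}(\mathcal R_\psi)$. $\boldsymbol\psi$ is $\mathbf L$-calibrated if there is $\mathrm{pred}:\mathcal C\to[k]$ such that for all $\mathbf p\in\Delta_n$: $\inf_{\mathbf u\in\mathcal C:\mathrm{pred}(\mathbf u)\notin\operatorname{argmin}_t\mathbf p^\top\boldsymbol\ell_t}\mathbf p^\top\boldsymbol\psi(\mathbf u)>\inf_{\mathbf u\in\mathcal C}\mathbf p^\top\boldsymbol\psi(\mathbf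 u)$ (an infimum over the empty set is $+\infty$). *)

(* classical reals. Vectors in R^m are functions nat -> R;
   only coordinates 0..m-1 are meaningful. *)
From Stdlib Require Import Reals.
Open Scope R_scope.

Fixpoint dot (n : nat) (p z : nat -> R) : R :=
  match n with
  | O => 0
  | S m => dot m p z + p m * z m
  end.

Definition vec_in (m : nat) (v : nat -> R) : Prop :=
  forall i, (m <= i)%nat -> v i = 0.

Definition in_simplex (n : nat) (p : nat -> R) : Prop :=
  (forall i, (i < n)%nat -> 0 <= p i) /\ dot n p (fun _ => 1) = 1.

Definition convex_subset (d : nat) (C : (nat -> R) -> Prop) : Prop :=
  (forall u, C u -> vec_in d u) /\
  (forall u v t, C u -> C v -> 0 <= t <= 1 ->
     C (fun i => t * u i + (1 - t) * v i)).

Definition R_psi (n : nat) (C : (nat -> R) -> Prop) (psi : (nat -> R) -> nat -> R)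
  (x : nat -> R) : Prop :=
  exists u, C u /\ forall i, (i < n)%nat -> x i = psi u i.

Definition conv (n : nat) (A : (nat -> R) -> Prop) (z : nat -> R) : Prop :=
  vec_in n z /\
  exists (m : nat) (lam : nat -> R) (a : nat -> nat -> R),
    (forall j, (j < m)%nat -> 0 <= lam j /\ A (a j)) /\
    dot m lam (fun _ => 1) = 1 /\
    forall i, (i < n)%nat -> z i = dot m lam (fun j => a j i).

Definition S_psi (n : nat) (C : (nat -> R) -> Prop) (psi : (nat -> R) -> nat -> R) :=
  conv n (R_psi n C psi).

Definition is_glb (A : R -> Prop) (m : R) : Prop :=
  (forall x, A x -> m <= x) /\ (forall b, (forall x, A x -> b <= x) -> b <= m).

Definition col (L : nat -> nat -> R) (t : nat) : nat -> R := fun i => L i t.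

Definition optimal (n k : nat) (L : nat -> nat -> R) (p : nat -> R) (t : nat) : Prop :=
  (t < k)%nat /\
  forall t', (t' < k)%nat -> dot n p (col L t) <= dot n p (col L t').

(* psi is L-calibrated; an infimum over the empty set is +infinity,
   so the strict inequality holds trivially when the left set is empty. *)
Definition calibrated (n k : nat) (L : nat -> nat -> R)
  (C : (nat -> R) -> Prop) (psi : (nat -> R) -> nat -> R) : Prop :=
  exists pred : (nat -> R) -> nat,
    (forall u, C u -> (pred u < k)%nat) /\
    forall p, in_simplex n p ->
      let Abad := fun r => exists u, C u /\ ~ optimal n k L p (pred u) /\ r = dot n p (psi u) in
      let Aall := fun r => exists u, C u /\ r = dot n p (psi u) in
      (forall r, ~ Abad r) \/
      exists a b, is_glb Abad a /\ is_glb Aall b /\ b < a.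

From Stdlib Require Import Reals Lra Lia Classical ClassicalEpsilon.
Open Scope R_scope.

(* By Caratheodory, every z in S_psi is a convex combination of at most n + 1 points
   psi(u_j), so one of them, u, has weight at least 1/(n+1).  Hence for every p in the
   simplex, p.psi(u) - inf <= (n+1) (p.z - inf), and pred' z := pred u inherits
   calibration: along a minimizing sequence z_m the points u_m eventually fall below the
   infimum over suboptimal predictions.  Conversely, with pred u := pred' (psi u), a
   minimizing sequence of suboptimal u_m would contradict the condition on S_psi if the
   suboptimal infimum equalled the overall one. *)

Fixpoint fsum (m : nat) (f : nat -> R) : R :=
  match m with O => 0 | S m' => fsum m' f + f m' end.

Lemma dot_fsum n p z : dot n p z = fsum n (fun i => p i * z i).
Proof. induction n as [|n IH]; simpl; [reflexivity | now rewrite IH]. Qed.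

Lemma fsum_ext m f g : (forall j, (j < m)%nat -> f j = g j) -> fsum m f = fsum m g.
Proof.
  induction m as [|m IH]; intros Hfg; simpl; [reflexivity|].
  rewrite IH by (intros; apply Hfg; lia). now rewrite Hfg by lia.
Qed.

Lemma dot_ext n p z z' : (forall i, (i < n)%nat -> z i = z' i) -> dot n p z = dot n p z'.
Proof. intros Hz. rewrite !dot_fsum. apply fsum_ext. intros i Hi. now rewrite Hz. Qed.

Lemma fsum_add m f g : fsum m (fun j => f j + g j) = fsum m f + fsum m g.
Proof. induction m as [|m IH]; simpl; [lra | rewrite IH; lra]. Qed.

Lemma fsum_scal m c f : fsum m (fun j => c * f j) = c * fsum m f.
Proof. induction m as [|m IH]; simpl; [lra | rewrite IH; lra]. Qed.

Lemma fsum_const m c : fsum m (fun _ => c) = INR m * c.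
Proof. induction m as [|m IH]; [simpl; lra | simpl fsum; rewrite IH, S_INR; lra]. Qed.

Lemma fsum_comm n m f :
  fsum n (fun i => fsum m (fun j => f i j)) = fsum m (fun j => fsum n (fun i => f i j)).
Proof.
  induction n as [|n IH]; simpl.
  - rewrite fsum_const. lra.
  - now rewrite IH, <- fsum_add.
Qed.

Lemma fsum_le m f g : (forall j, (j < m)%nat -> f j <= g j) -> fsum m f <= fsum m g.
Proof.
  induction m as [|m IH]; intros Hfg; simpl; [lra|].
  assert (fsum m f <= fsum m g) by (apply IH; intros; apply Hfg; lia).
  assert (f m <= g m) by (apply Hfg; lia). lra.
Qed.

Lemma fsum_nonneg m f : (forall j, (j < m)%nat -> 0 <= f j) -> 0 <= fsum m f.
Proof. intros Hf. rewrite <- (Rmult_0_r (INR m)), <- fsum_const. now apply fsum_le. Qed.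

Lemma fsum_ge_term m f j : (forall i, (i < m)%nat -> 0 <= f i) -> (j < m)%nat ->
  f j <= fsum m f.
Proof.
  induction m as [|m IH]; intros Hf Hj; simpl; [lia|].
  assert (0 <= f m) by (apply Hf; lia).
  destruct (Nat.eq_dec j m) as [->|Hne].
  - assert (0 <= fsum m f) by (apply fsum_nonneg; intros; apply Hf; lia). lra.
  - assert (f j <= fsum m f) by (apply IH; [intros; apply Hf | ]; lia). lra.
Qed.

Lemma fsum_update m j0 x f : (j0 < m)%nat ->
  fsum m (fun j => if Nat.eqb j j0 then x else f j) = fsum m f - f j0 + x.
Proof.
  induction m as [|m IH]; intros Hj0; [lia|]. simpl.
  destruct (Nat.eq_dec j0 m) as [->|Hne].
  - rewrite Nat.eqb_refl, (fsum_ext m _ f); [lra|].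
    intros i Hi. destruct (Nat.eqb_spec i m); [lia | reflexivity].
  - rewrite IH by lia. destruct (Nat.eqb_spec m j0); [lia | lra].
Qed.

Definition transp (a b j : nat) : nat :=
  if Nat.eqb j a then b else if Nat.eqb j b then a else j.

Lemma transp_r a b : transp a b b = a.
Proof. unfold transp. destruct (Nat.eqb_spec b a); [easy|]. now rewrite Nat.eqb_refl. Qed.

Lemma transpK a b j : transp a b (transp a b j) = j.
Proof.
  unfold transp.
  repeat match goal with
  | |- context [Nat.eqb ?x ?y] => is_var x; is_var y; destruct (Nat.eqb_spec x y)
  end; subst; rewrite ?Nat.eqb_refl; repeat (destruct (Nat.eqb_spec _ _)); lia.
Qed.

Lemma transp_lt a b j m : (a < m)%nat -> (b < m)%nat -> (j < m)%nat -> (transp a b j < m)%nat.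
Proof. unfold transp. destruct (Nat.eqb j a), (Nat.eqb j b); lia. Qed.

Lemma fsum_transp_last m j0 f : (j0 <= m)%nat ->
  fsum (S m) (fun j => f (transp j0 m j)) = fsum (S m) f.
Proof.
  intros Hj0. destruct (Nat.eq_dec j0 m) as [->|Hne].
  - apply fsum_ext. intros j _. unfold transp. destruct (Nat.eqb_spec j m); now subst.
  - simpl. rewrite transp_r.
    rewrite (fsum_ext m _ (fun j => if Nat.eqb j j0 then f m else f j)).
    + rewrite fsum_update by lia. lra.
    + intros j Hj. unfold transp. destruct (Nat.eqb_spec j j0); [easy|].
      destruct (Nat.eqb_spec j m); [lia | easy].
Qed.

Lemma exists_argmin m (P : nat -> Prop) (f : nat -> R) :
  (exists j, (j < m)%nat /\ P j) ->
  exists j, (j < m)%nat /\ P j /\ forall i, (i < m)%nat -> P i -> f j <= f i.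
Proof.
  induction m as [|m IH]; intros [j0 [Hj0 HP0]]; [lia|].
  destruct (classic (exists j, (j < m)%nat /\ P j)) as [Hex|Hnone].
  - destruct (IH Hex) as [j [Hj [HPj Hmin]]].
    destruct (classic (P m /\ f m < f j)) as [[HPm Hlt]|Hnot].
    + exists m. repeat split; auto. intros i Hi HPi.
      destruct (Nat.eq_dec i m) as [->|]; [lra|].
      specialize (Hmin i ltac:(lia) HPi). lra.
    + exists j. repeat split; auto. intros i Hi HPi.
      destruct (Nat.eq_dec i m) as [->|].
      * apply Rnot_lt_le. intro. now apply Hnot.
      * apply Hmin; auto; lia.
  - exists m. assert (j0 = m) as <-.
    { destruct (Nat.eq_dec j0 m); auto. exfalso. apply Hnone. exists j0. split; auto; lia. }
    repeat split; auto. intros i Hi HPi.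
    destruct (Nat.eq_dec i j0) as [->|]; [lra|].
    exfalso. apply Hnone. exists i. split; auto; lia.
Qed.

Lemma dependence_eliminate_last N m (v : nat -> nat -> R) nu :
  v m N <> 0 -> (exists j, (j < m)%nat /\ nu j <> 0) ->
  (forall i, (i < N)%nat ->
     fsum m (fun j => nu j * (v j i - v j N / v m N * v m i)) = 0) ->
  exists mu, (exists j, (j < S m)%nat /\ mu j <> 0) /\
    forall i, (i < S N)%nat -> fsum (S m) (fun j => mu j * v j i) = 0.
Proof.
  intros Hpiv [j [Hj Hnu]] Hdep.
  set (c := fsum m (fun j => nu j * (v j N / v m N))).
  exists (fun j => if Nat.eqb j m then - c else nu j). split.
  { exists j. split; [lia|]. destruct (Nat.eqb_spec j m); [lia | easy]. }
  intros i Hi. simpl. rewrite Nat.eqb_refl.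
  rewrite (fsum_ext m _ (fun j => nu j * v j i)).
  2:{ intros j' Hj'. destruct (Nat.eqb_spec j' m); [lia | easy]. }
  assert (Hsplit : fsum m (fun j => nu j * v j i) =
    fsum m (fun j => nu j * (v j i - v j N / v m N * v m i)) + v m i * c).
  { unfold c. rewrite <- fsum_scal, <- fsum_add. apply fsum_ext. intros; ring. }
  destruct (Nat.eq_dec i N) as [->|HiN].
  - rewrite Hsplit, (fsum_ext m _ (fun _ => 0)), fsum_const; [ring|].
    intros j' _. field. exact Hpiv.
  - rewrite Hsplit, Hdep by lia. ring.
Qed.

Lemma linear_dependence N : forall m (v : nat -> nat -> R), (N < m)%nat ->
  exists mu, (exists j, (j < m)%nat /\ mu j <> 0) /\
    forall i, (i < N)%nat -> fsum m (fun j => mu j * v j i) = 0.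
Proof.
  induction N as [|N IH]; intros m v Hm.
  - exists (fun _ => 1). split; [exists 0%nat; split; [lia | lra] | intros; lia].
  - destruct (classic (exists j0, (j0 < m)%nat /\ v j0 N <> 0))
      as [[j0 [Hj0 Hpiv]]|Hzero].
    + destruct m as [|m]; [lia|].
      (* Move the pivot vector to the last position and eliminate coordinate N. *)
      set (s := transp j0 m).
      set (w := fun j i => v (s j) i - v (s j) N / v (s m) N * v (s m) i).
      assert (Hpiv' : v (s m) N <> 0) by (unfold s; now rewrite transp_r).
      destruct (IH m w ltac:(lia)) as [nu [Hnu Hdep]].
      destruct (dependence_eliminate_last N m (fun j => v (s j)) nu Hpiv' Hnu Hdep)
        as [mu [[j [Hj Hmu]] Hmudep]].
      exists (fun j => mu (s j)). split.
      * exists (s j). split; [apply transp_lt; lia | unfold s; now rewrite transpK].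
      * intros i Hi. rewrite <- (Hmudep i Hi), <- (fsum_transp_last m j0) by lia.
        apply fsum_ext. intros j' _. unfold s. now rewrite transpK.
    + destruct (IH m v ltac:(lia)) as [mu [Hmu Hdep]]. exists mu. split; [exact Hmu|].
      intros i Hi. destruct (Nat.eq_dec i N) as [->|HiN]; [|apply Hdep; lia].
      rewrite (fsum_ext m _ (fun _ => 0)), fsum_const; [ring|].
      intros j Hj. replace (v j N) with 0; [ring|].
      apply NNPP. intro. apply Hzero. exists j. auto.
Qed.

Definition conv_rep (n : nat) (A : (nat -> R) -> Prop) (z : nat -> R)
  (m : nat) (lam : nat -> R) (a : nat -> nat -> R) : Prop :=
  (forall j, (j < m)%nat -> 0 <= lam j /\ A (a j)) /\ fsum m lam = 1 /\
  forall i, (i < n)%nat -> z i = fsum m (fun j => lam j * a j i).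

Lemma conv_rep_of_conv n A z : conv n A z -> exists m lam a, conv_rep n A z m lam a.
Proof.
  intros [_ [m [lam [a [Hla [Hsum Hz]]]]]]. exists m, lam, a. split; [exact Hla|split].
  - rewrite <- Hsum, dot_fsum. apply fsum_ext. intros; ring.
  - intros i Hi. now rewrite Hz, dot_fsum.
Qed.

Lemma affine_dependence n m (a : nat -> nat -> R) : (S n < m)%nat ->
  exists mu, (exists j, (j < m)%nat /\ 0 < mu j) /\ fsum m mu = 0 /\
    forall i, (i < n)%nat -> fsum m (fun j => mu j * a j i) = 0.
Proof.
  intros Hm.
  destruct (linear_dependence (S n) m (fun j i => if Nat.ltb i n then a j i else 1) Hm)
    as [mu [[j [Hj Hmuj]] Hdep]].
  (* Rescaling by [mu j] makes the j-th coefficient positive. *)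
  exists (fun j' => mu j * mu j'). split; [|split].
  - exists j. split; [exact Hj|]. now apply Rsqr_pos_lt.
  - rewrite fsum_scal. replace (fsum m mu) with 0; [ring|].
    rewrite <- (Hdep n) by lia. apply fsum_ext. intros. rewrite Nat.ltb_irrefl. ring.
  - intros i Hi. rewrite (fsum_ext m _ (fun j' => mu j * (mu j' * a j' i))) by (intros; ring).
    rewrite fsum_scal. replace (fsum m _) with 0; [ring|].
    rewrite <- (Hdep i) by lia. apply fsum_ext. intros j' _.
    destruct (Nat.ltb_spec i n); [easy | lia].
Qed.

Lemma conv_rep_cancel_weight n A z m lam a mu :
  conv_rep n A z m lam a -> (exists j, (j < m)%nat /\ 0 < mu j) -> fsum m mu = 0 ->
  (forall i, (i < n)%nat -> fsum m (fun j => mu j * a j i) = 0) ->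
  exists lam' js, conv_rep n A z m lam' a /\ (js < m)%nat /\ lam' js = 0.
Proof.
  intros [Hla [Hsum Hz]] Hpos Hmusum Hmua.
  destruct (exists_argmin m (fun j => 0 < mu j) (fun j => lam j / mu j) Hpos)
    as [js [Hjs [Hmujs Hmin]]].
  set (t := lam js / mu js).
  assert (Ht : 0 <= t).
  { unfold t, Rdiv. apply Rmult_le_pos; [apply Hla, Hjs | left; now apply Rinv_0_lt_compat]. }
  exists (fun j => lam j - t * mu j), js. split; [split; [|split]|split].
  - intros j Hj. split; [|apply Hla, Hj]. destruct (Hla j Hj) as [Hlj _].
    destruct (Rle_lt_dec (mu j) 0) as [Hneg|Hpos'].
    + nra.
    + specialize (Hmin j Hj Hpos'). fold t in Hmin.
      apply (Rmult_le_compat_r (mu j)) in Hmin; [|lra].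
      unfold Rdiv in Hmin. rewrite Rmult_assoc, Rinv_l, Rmult_1_r in Hmin; lra.
  - rewrite (fsum_ext m _ (fun j => lam j + - t * mu j)) by (intros; ring).
    rewrite fsum_add, fsum_scal, Hsum, Hmusum. ring.
  - intros i Hi. rewrite Hz by exact Hi.
    rewrite (fsum_ext m (fun j => (lam j - t * mu j) * a j i)
      (fun j => lam j * a j i + - t * (mu j * a j i))) by (intros; ring).
    rewrite fsum_add, fsum_scal, Hmua by exact Hi. ring.
  - exact Hjs.
  - unfold t. field. lra.
Qed.

Lemma conv_rep_drop n A z m lam a js :
  conv_rep n A z (S m) lam a -> (js < S m)%nat -> lam js = 0 ->
  exists lam' a', conv_rep n A z m lam' a'.
Proof.
  intros [Hla [Hsum Hz]] Hjs Hzero.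
  set (s := transp js m).
  assert (Hs : forall j, (j < S m)%nat -> (s j < S m)%nat)
    by (intros; apply transp_lt; lia).
  assert (Hlast : forall f : nat -> R,
    fsum m (fun j => f (s j)) = fsum (S m) f - f js).
  { intros f. rewrite <- (fsum_transp_last m js) by lia. simpl.
    unfold s. rewrite transp_r. ring. }
  exists (fun j => lam (s j)), (fun j => a (s j)). split; [|split].
  - intros j Hj. apply Hla, Hs. lia.
  - rewrite Hlast, Hsum, Hzero. ring.
  - intros i Hi. rewrite (Hlast (fun j => lam j * a j i)), Hzero, <- Hz by exact Hi.
    ring.
Qed.

Lemma caratheodory n A z m lam a : conv_rep n A z m lam a ->
  exists m' lam' a', (m' <= S n)%nat /\ conv_rep n A z m' lam' a'.
Proof.
  revert lam a. induction m as [|m IH]; intros lam a Hrep.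
  - exists 0%nat, lam, a. split; [lia | exact Hrep].
  - destruct (Compare_dec.le_lt_dec (S m) (S n)) as [Hle|Hgt].
    { exists (S m), lam, a. split; [exact Hle | exact Hrep]. }
    destruct (affine_dependence n (S m) a Hgt) as [mu [Hpos [Hmusum Hmua]]].
    destruct (conv_rep_cancel_weight n A z (S m) lam a mu Hrep Hpos Hmusum Hmua)
      as [lam' [js [Hrep' [Hjs Hzero]]]].
    destruct (conv_rep_drop n A z m lam' a js Hrep' Hjs Hzero) as [lam'' [a'' Hrep'']].
    exact (IH lam'' a'' Hrep'').
Qed.

Lemma exists_heavy_weight n m lam : (m <= S n)%nat ->
  (forall j, (j < m)%nat -> 0 <= lam j) -> fsum m lam = 1 ->
  exists j, (j < m)%nat /\ 1 <= INR (S n) * lam j.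
Proof.
  intros Hm Hnonneg Hsum. destruct m as [|m]; [simpl in Hsum; lra|].
  destruct (exists_argmin (S m) (fun _ => True) (fun j => - lam j)) as [j [Hj [_ Hmax]]].
  { exists 0%nat. split; [lia | exact I]. }
  exists j. split; [exact Hj|].
  assert (fsum (S m) lam <= INR (S m) * lam j).
  { rewrite <- fsum_const. apply fsum_le. intros i Hi. specialize (Hmax i Hi I). lra. }
  assert (INR (S m) <= INR (S n)) by (apply le_INR; exact Hm).
  assert (0 <= lam j) by (apply Hnonneg, Hj).
  nra.
Qed.

Lemma dot_conv_rep n A z m lam a p : conv_rep n A z m lam a ->
  dot n p z = fsum m (fun j => lam j * dot n p (a j)).
Proof.
  intros [_ [_ Hz]]. rewrite dot_fsum.
  rewrite (fsum_ext n _ (fun i => fsum m (fun j => p i * (lam j * a j i)))).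
  - rewrite fsum_comm. apply fsum_ext. intros j _. rewrite dot_fsum, <- fsum_scal.
    apply fsum_ext. intros; ring.
  - intros i Hi. now rewrite Hz, <- fsum_scal.
Qed.

Definition heavy_point n C (psi : (nat -> R) -> nat -> R) (z u : nat -> R) : Prop :=
  C u /\ forall p, (forall i, (i < n)%nat -> 0 <= p i) ->
    forall b, (forall u', C u' -> b <= dot n p (psi u')) ->
    dot n p (psi u) - b <= INR (S n) * (dot n p z - b).

Lemma exists_heavy_point n C psi z : S_psi n C psi z -> exists u, heavy_point n C psi z u.
Proof.
  intros Hz. destruct (conv_rep_of_conv n _ z Hz) as [m0 [lam0 [a0 Hrep0]]].
  destruct (caratheodory n _ z m0 lam0 a0 Hrep0) as [m [lam [a [Hm Hrep]]]].
  pose proof Hrep as [Hla [Hsum _]].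
  destruct (exists_heavy_weight n m lam Hm) as [j1 [Hj1 Hheavy]];
    [intros j Hj; apply Hla, Hj | exact Hsum|].
  destruct (proj2 (Hla j1 Hj1)) as [u [Hu Hau]].
  exists u. split; [exact Hu|]. intros p Hp b Hb.
  assert (Hgap : forall j, (j < m)%nat -> 0 <= lam j * (dot n p (a j) - b)).
  { intros j Hj. destruct (Hla j Hj) as [Hlj [u' [Hu' Ha']]].
    rewrite (dot_ext n p _ (psi u')) by exact Ha'.
    specialize (Hb u' Hu'). apply Rmult_le_pos; lra. }
  assert (Hzb : dot n p z - b = fsum m (fun j => lam j * (dot n p (a j) - b))).
  { rewrite (dot_conv_rep n _ z m lam a p Hrep).
    rewrite (fsum_ext m (fun j => lam j * (dot n p (a j) - b))
      (fun j => lam j * dot n p (a j) + - b * lam j)) by (intros; ring).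
    rewrite fsum_add, fsum_scal, Hsum. ring. }
  pose proof (fsum_ge_term m _ j1 Hgap Hj1) as Hterm. rewrite <- Hzb in Hterm.
  rewrite (dot_ext n p (a j1) (psi u)) in Hterm by exact Hau.
  assert (b <= dot n p (psi u)) by (apply Hb, Hu).
  assert (0 <= INR (S n)) by apply pos_INR.
  nra.
Qed.

Lemma is_glb_exists (A : R -> Prop) c : (exists x, A x) -> (forall x, A x -> c <= x) ->
  exists b, is_glb A b.
Proof.
  intros [x Hx] Hc.
  destruct (completeness (fun y => A (- y))) as [m [Hub Hlub]].
  - exists (- c). intros y Hy. specialize (Hc _ Hy). lra.
  - exists (- x). now rewrite Ropp_involutive.
  - exists (- m). split.
    + intros y Hy. assert (- y <= m) by (apply Hub; now rewrite Ropp_involutive). lra.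
    + intros b Hb. assert (m <= - b) by (apply Hlub; intros y Hy; specialize (Hb _ Hy); lra).
      lra.
Qed.

Lemma is_glb_unique A a b : is_glb A a -> is_glb A b -> a = b.
Proof. intros [Ha1 Ha2] [Hb1 Hb2]. apply Rle_antisym; [apply Hb2 | apply Ha2]; assumption. Qed.

Lemma is_glb_lower_bounds_iff (A B : R -> Prop) b :
  (forall c, (forall x, A x -> c <= x) <-> (forall x, B x -> c <= x)) ->
  is_glb A b -> is_glb B b.
Proof. intros E [H1 H2]. split; [now apply E | intros c Hc; apply H2, E, Hc]. Qed.

Definition trunc n (psi : (nat -> R) -> nat -> R) u : nat -> R :=
  fun i => if Nat.ltb i n then psi u i else 0.

Lemma S_psi_trunc n C psi u : C u -> S_psi n C psi (trunc n psi u).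
Proof.
  intros Hu. split.
  - intros i Hi. unfold trunc. destruct (Nat.ltb_spec i n); [lia | reflexivity].
  - exists 1%nat, (fun _ => 1), (fun _ => trunc n psi u). split; [|split].
    + intros j _. split; [lra|]. exists u. split; [exact Hu|].
      intros i Hi. unfold trunc. destruct (Nat.ltb_spec i n); [reflexivity | lia].
    + simpl. ring.
    + intros i _. simpl. ring.
Qed.

Lemma dot_trunc n p psi u : dot n p (trunc n psi u) = dot n p (psi u).
Proof. apply dot_ext. intros i Hi. unfold trunc. destruct (Nat.ltb_spec i n); [reflexivity | lia]. Qed.

Lemma hull_lower_bounds n C psi p : (forall i, (i < n)%nat -> 0 <= p i) -> forall c,
  (forall r, (exists z, S_psi n C psi z /\ r = dot n p z) -> c <= r) <->
  (forall r, (exists u, C u /\ r = dot n p (psi u)) -> c <= r).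
Proof.
  intros Hp c. split.
  - intros Hc r [u [Hu ->]]. rewrite <- dot_trunc.
    apply Hc. exists (trunc n psi u). split; [apply S_psi_trunc, Hu | reflexivity].
  - intros Hc r [z [Hz ->]].
    destruct (conv_rep_of_conv n _ z Hz) as [m [lam [a Hrep]]].
    pose proof Hrep as [Hla [Hsum _]].
    rewrite (dot_conv_rep n _ z m lam a p Hrep).
    apply Rle_trans with (fsum m (fun j => c * lam j)); [rewrite fsum_scal, Hsum; lra|].
    apply fsum_le. intros j Hj. destruct (Hla j Hj) as [Hl [u [Hu Ha]]].
    rewrite Rmult_comm. apply Rmult_le_compat_l; [exact Hl|].
    rewrite (dot_ext n p _ (psi u)) by exact Ha. apply Hc. now exists u.
Qed.

Definition hull_calibrated (n k : nat) (L : nat -> nat -> R)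
  (C : (nat -> R) -> Prop) (psi : (nat -> R) -> nat -> R) : Prop :=
  exists pred' : (nat -> R) -> nat,
    (forall z, S_psi n C psi z -> (pred' z < k)%nat) /\
    forall p, in_simplex n p ->
    forall zs : nat -> nat -> R,
      (forall m, S_psi n C psi (zs m)) ->
      (exists b, is_glb (fun r => exists z, S_psi n C psi z /\ r = dot n p z) b /\
                 Un_cv (fun m => dot n p (zs m)) b) ->
      exists M, forall m, (M <= m)%nat -> optimal n k L p (pred' (zs m)).

Lemma hull_calibrated_of_calibrated n k L C psi :
  calibrated n k L C psi -> hull_calibrated n k L C psi.
Proof.
  intros [pred [Hpred Hcal]].
  destruct (choice (fun z u => S_psi n C psi z -> heavy_point n C psi z u)) as [h Hh].
  { intros z. destruct (classic (S_psi n C psi z)) as [Hz|Hz].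
    - destruct (exists_heavy_point n C psi z Hz) as [u Hu]. now exists u.
    - exists z. intro. contradiction. }
  exists (fun z => pred (h z)). split; [intros z Hz; apply Hpred, Hh, Hz|].
  intros p Hp zs Hzs [b [Hglb Hcv]].
  assert (Hp0 : forall i, (i < n)%nat -> 0 <= p i) by apply Hp.
  destruct (Hcal p Hp) as [Hnobad | [a [b' [Ha [Hb' Hlt]]]]].
  - exists 0%nat. intros m _. apply NNPP. intro Hbad.
    apply (Hnobad (dot n p (psi (h (zs m))))). exists (h (zs m)).
    repeat split; [apply Hh, Hzs | exact Hbad].
  - replace b' with b in *
      by (apply (is_glb_unique _ _ _ (is_glb_lower_bounds_iff _ _ _
                   (hull_lower_bounds n C psi p Hp0) Hglb) Hb')).
    assert (HSn : 0 < INR (S n)) by (apply lt_0_INR; lia).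
    destruct (Hcv ((a - b) / INR (S n))) as [M HM].
    { apply Rlt_gt, Rdiv_lt_0_compat; lra. }
    exists M. intros m Hm. specialize (HM m Hm). unfold Rdist in HM.
    apply Rabs_def2 in HM. destruct HM as [HM _].
    destruct (Hh (zs m) (Hzs m)) as [Hu Hheavy].
    specialize (Hheavy p Hp0 b (fun u' Hu' => proj1 Hb' _ (ex_intro _ u' (conj Hu' eq_refl)))).
    apply (Rmult_lt_compat_l (INR (S n))) in HM; [|exact HSn].
    replace (INR (S n) * ((a - b) / INR (S n))) with (a - b) in HM by (field; lra).
    apply NNPP. intro Hbad.
    assert (a <= dot n p (psi (h (zs m)))) by (apply (proj1 Ha); now exists (h (zs m))).
    lra.
Qed.

Lemma calibrated_of_hull_calibrated n k L C psi :
  (exists u, C u) -> (forall u, C u -> forall i, (i < n)%nat -> 0 <= psi u i) ->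
  hull_calibrated n k L C psi -> calibrated n k L C psi.
Proof.
  intros HCne Hpsi [pred' [Hpred' Hhull]].
  exists (fun u => pred' (trunc n psi u)). split; [intros u Hu; apply Hpred', S_psi_trunc, Hu|].
  intros p Hp Abad Aall.
  assert (Hp0 : forall i, (i < n)%nat -> 0 <= p i) by apply Hp.
  destruct (classic (exists r, Abad r)) as [Hbad | Hnobad]; [right | left; firstorder].
  assert (Hall0 : forall r, Aall r -> 0 <= r).
  { intros r [u [Hu ->]]. rewrite dot_fsum. apply fsum_nonneg. intros i Hi. apply Rmult_le_pos; [apply Hp0 | apply Hpsi]; assumption. }
  destruct (is_glb_exists Abad 0 Hbad) as [a Ha].
  { intros r [u [Hu [_ ->]]]. apply Hall0. now exists u. }
  destruct (is_glb_exists Aall 0) as [b Hb]; [|exact Hall0|].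
  { destruct HCne as [u Hu]. now exists (dot n p (psi u)), u. }
  exists a, b. split; [exact Ha | split; [exact Hb|]].
  apply Rnot_le_lt. intro Hab.
  destruct (choice (fun (m : nat) u => C u /\ ~ optimal n k L p (pred' (trunc n psi u)) /\
                  dot n p (psi u) < a + / (INR m + 1))) as [us Hus].
  { intros m. apply NNPP. intro Hnone.
    assert (Hpos : 0 < / (INR m + 1)) by (apply Rinv_0_lt_compat; pose proof (pos_INR m); lra).
    assert (a + / (INR m + 1) <= a); [|lra].
    apply (proj2 Ha). intros r [u [Hu [Hopt ->]]].
    apply Rnot_lt_le. intro Hlt. apply Hnone. now exists u. }
  destruct (Hhull p Hp (fun m => trunc n psi (us m))) as [M HM].
  - intros m. apply S_psi_trunc, Hus.
  - exists b. split.
    + apply (is_glb_lower_bounds_iff Aall); [|exact Hb].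
      intro c. symmetry. apply hull_lower_bounds, Hp0.
    + intros eps Heps. destruct (archimed_cor1 eps Heps) as [N [HN HN0]].
      exists N. intros m Hm. unfold Rdist. rewrite dot_trunc.
      destruct (Hus m) as [Hu [_ Hlt]].
      assert (b <= dot n p (psi (us m))) by (apply (proj1 Hb); now exists (us m)).
      assert (/ (INR m + 1) <= / INR N).
      { apply Rinv_le_contravar; [apply lt_0_INR, HN0|].
        assert (INR N <= INR m) by (apply le_INR, Hm). lra. }
      rewrite Rabs_right by lra. lra.
  - destruct (Hus M) as [_ [Hnot _]]. apply Hnot, HM. lia.
Qed.

Theorem mainTheorem19 (n k d : nat) (L : nat -> nat -> R)
  (C : (nat -> R) -> Prop) (psi : (nat -> R) -> nat -> R)
  (HL : forall i t, (i < n)%nat -> (t < k)%nat -> 0 <= L i t)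
  (HC : convex_subset d C)
  (HCne : exists u, C u)
  (Hpsi : forall u, C u -> forall i, (i < n)%nat -> 0 <= psi u i) :
  calibrated n k L C psi <->
  exists pred' : (nat -> R) -> nat,
    (forall z, S_psi n C psi z -> (pred' z < k)%nat) /\
    forall p, in_simplex n p ->
    forall zs : nat -> nat -> R,
      (forall m, S_psi n C psi (zs m)) ->
      (exists b, is_glb (fun r => exists z, S_psi n C psi z /\ r = dot n p z) b /\
                 Un_cv (fun m => dot n p (zs m)) b) ->
      exists M, forall m, (M <= m)%nat -> optimal n k L p (pred' (zs m)).
Proof.
  split.
  - apply hull_calibrated_of_calibrated.
  - apply calibrated_of_hull_calibrated; assumption.
Qed.
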